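(* There exists a perfect single-error-correcting code in $S_5$ with respect to the cyclic Kendall's $\tau$-distance; that is, there is a subset $\mathcal{C}\subseteq S_5$ such that for every $\pi\in S_5$ there is exactly one $\sigma\in\mathcal{C}$ with $d_\kappa(\sigma,\pi)\leq 1$.
   Context: $S_n$ denotes the set of all permutations of an $n$-element set, written as sequences $\sigma=[\sigma(1),\dots,\sigma(n)]$, where $\sigma(i)$ is the element in position $i$. A c-adjacent transposition applied to $\sigma$ either exchanges the entries in positions $i$ and $i+1$ for some $1\leq i\leq n-1$, or exchanges the entries $\sigma(1)$ and $\sigma(n)$ in positions $1$ and $n$. The cyclic Kendall's $\tau$-distance $d_\kappa(\sigma,\pi)$ is the minimum number of c-adjacent transpositions needed to transform $\sigma$ into $\pi$. *)

From mathcomp Require Import all_boot all_fingroup.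
Set Implicit Arguments. Unset Strict Implicit. Unset Printing Implicit Defensive.

(* A permutation sigma in S_n is a {perm 'I_n}; position i (0-based) holds sigma i. *)

Definition cadj (n : nat) (i j : 'I_n) : bool :=
  (j == i.+1 :> nat) || ((i == 0 :> nat) && (j == n.-1 :> nat) && (0 < n.-1)).

Definition cstep (n : nat) (sigma tau : {perm 'I_n}) : Prop :=
  exists i j : 'I_n, cadj i j /\ tau = (tperm i j * sigma)%g.
(* note: (tperm i j * sigma) x = sigma (tperm i j x), i.e. entries at positions i, j swapped *)

Fixpoint creach (n k : nat) (sigma tau : {perm 'I_n}) : Prop :=
  match k with
  | 0 => sigma = tau
  | k'.+1 => exists rho, cstep sigma rho /\ creach k' rho tau
  end.

Definition dkappa_le (n : nat) (sigma tau : {perm 'I_n}) (k : nat) : Prop :=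
  exists j, j <= k /\ creach j sigma tau.

From mathcomp Require Import all_boot all_fingroup.
Set Implicit Arguments. Unset Strict Implicit. Unset Printing Implicit Defensive.

(* The radius-1 ball of d_kappa around p consists of p and the five
   permutations obtained from it by one c-adjacent transposition, so 20
   disjoint balls exactly tile the 120 elements of S_5.  Encoding a permutation
   by its one-line notation [p 0; ...; p (n-1)] makes these balls computable,
   and the tiling by the 20 balls around the codewords below is checked by
   evaluation. *)

Section OneLineNotation.

Variable n : nat.

Definition perm_seq (p : {perm 'I_n}) : seq nat := [seq val (p i) | i <- enum 'I_n].

Lemma size_perm_seq p : size (perm_seq p) = n.
Proof. by rewrite size_map size_enum_ord. Qed.

Lemma nth_perm_seq p (k : 'I_n) : nth 0 (perm_seq p) k = val (p k).
Proof. by rewrite (nth_map k) ?size_enum_ord // nth_ord_enum. Qed.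

Lemma perm_seq_inj : injective perm_seq.
Proof.
move=> p q epq; apply/permP => k; apply: val_inj.
by rewrite -!nth_perm_seq epq.
Qed.

Lemma perm_seq_perm_eq p : perm_eq (perm_seq p) (iota 0 n).
Proof.
have -> : perm_seq p = map val (map p (enum 'I_n)) by rewrite -map_comp.
rewrite -val_enum_ord; apply: perm_map; apply: uniq_perm; rewrite ?enum_uniq //.
  by rewrite map_inj_uniq ?enum_uniq //; apply: perm_inj.
move=> k; rewrite mem_enum; apply/mapP; exists ((p^-1)%g k); by rewrite ?mem_enum ?permKV.
Qed.

Lemma perm_seq_onto l : perm_eq l (iota 0 n) -> exists p, perm_seq p = l.
Proof.
move=> l_perm; have size_l : size l = n by rewrite (perm_size l_perm) size_iota.
have l_lt k : k < n -> nth 0 l k < n.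
  move=> lt_kn; have : nth 0 l k \in iota 0 n by rewrite -(perm_mem l_perm) mem_nth ?size_l.
  by rewrite mem_iota.
pose f (k : 'I_n) : 'I_n := insubd k (nth 0 l k).
have val_f k : val (f k) = nth 0 l k by rewrite val_insubd l_lt.
have f_inj : injective f.
  move=> j k /(congr1 val); rewrite !val_f => /eqP.
  rewrite nth_uniq ?size_l // ?(perm_uniq l_perm) ?iota_uniq // => /eqP.
  exact: val_inj.
exists (perm f_inj); apply: (@eq_from_nth _ 0); rewrite size_perm_seq ?size_l //.
by move=> k lt_kn; rewrite -[k]/(val (Ordinal lt_kn)) nth_perm_seq permE val_f.
Qed.

Definition swap_seq (a b : nat) (l : seq nat) : seq nat :=
  mkseq (fun k => nth 0 l (if k == a then b else if k == b then a else k)) (size l).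

Lemma perm_seq_tperm (i j : 'I_n) p :
  perm_seq (tperm i j * p)%g = swap_seq i j (perm_seq p).
Proof.
apply: (@eq_from_nth _ 0) => [|k]; rewrite /swap_seq ?size_mkseq !size_perm_seq // => lt_kn.
rewrite nth_mkseq ?size_perm_seq // -[k]/(val (Ordinal lt_kn)) !nth_perm_seq permM.
case: tpermP => [->|->|/eqP ki /eqP kj].
- by rewrite eqxx nth_perm_seq.
- by case: eqP => [/val_inj ->|_]; rewrite ?eqxx nth_perm_seq.
- by rewrite !val_eqE (negbTE ki) (negbTE kj) nth_perm_seq.
Qed.

Lemma dkappa_le1 (s p : {perm 'I_n}) : dkappa_le s p 1 <-> s = p \/ cstep s p.
Proof.
split; last by case=> [->|step]; [exists 0 | exists 1; split=> //; exists p].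
case=> [[|[|k]]] [] //= _; first by left.
by case=> rho [step <-]; right.
Qed.

Definition cadj_nat (a b : nat) : bool :=
  (b == a.+1) || ((a == 0) && (b == n.-1) && (0 < n.-1)).

Definition ball1_seq (w l : seq nat) : bool :=
  (w == l) || has (fun ab => cadj_nat ab.1 ab.2 && (w == swap_seq ab.1 ab.2 l))
                  [seq (a, b) | a <- iota 0 n, b <- iota 0 n].

Lemma dkappa_le1_seq (s p : {perm 'I_n}) :
  dkappa_le s p 1 <-> ball1_seq (perm_seq s) (perm_seq p).
Proof.
have swap_tperm i j : s = (tperm i j * p)%g <-> p = (tperm i j * s)%g.
  by split=> ->; rewrite mulgA tperm2 mul1g.
apply: iff_trans (dkappa_le1 s p) _; rewrite /ball1_seq (inj_eq perm_seq_inj); split.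
  case=> [->|[i [j [ij /swap_tperm ->]]]]; first by rewrite eqxx.
  apply/orP; right; apply/hasP; exists (val i, val j).
    by apply: allpairs_f; rewrite mem_iota ltn_ord.
  by rewrite /= -[cadj_nat _ _]/(cadj i j) ij perm_seq_tperm eqxx.
case/orP=> [/eqP ->|/hasP [_ /allpairsP [[a b] [/= + + ->]] /andP [ab /eqP]]].
  by left.
rewrite !mem_iota /= => lt_an lt_bn.
rewrite -[a]/(val (Ordinal lt_an)) -[b]/(val (Ordinal lt_bn)) -perm_seq_tperm.
by move=> /perm_seq_inj /swap_tperm ->; right; exists (Ordinal lt_an), (Ordinal lt_bn).
Qed.

End OneLineNotation.

Definition code5 : seq (seq nat) :=
 [:: [:: 0; 2; 1; 3; 4]; [:: 0; 1; 4; 2; 3]; [:: 1; 0; 3; 2; 4]; [:: 2; 1; 3; 4; 0];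
     [:: 0; 3; 2; 4; 1]; [:: 3; 2; 4; 1; 0]; [:: 2; 0; 4; 3; 1]; [:: 4; 3; 1; 2; 0];
     [:: 3; 0; 1; 4; 2]; [:: 0; 4; 3; 1; 2]; [:: 4; 0; 2; 1; 3]; [:: 1; 4; 2; 3; 0];
     [:: 1; 2; 0; 4; 3]; [:: 4; 2; 3; 0; 1]; [:: 1; 3; 4; 0; 2]; [:: 3; 1; 2; 0; 4];
     [:: 3; 4; 0; 2; 1]; [:: 4; 1; 0; 3; 2]; [:: 2; 3; 0; 1; 4]; [:: 2; 4; 1; 0; 3]].

Lemma code5_perm_eq : all (perm_eq^~ (iota 0 5)) code5.
Proof. by vm_compute. Qed.

Lemma code5_perfect :
  all (fun l => size [seq w <- code5 | ball1_seq 5 w l] == 1) (permutations (iota 0 5)).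
Proof. by vm_compute. Qed.

Theorem mainTheorem3 :
  exists C : {set {perm 'I_5}},
    forall pi : {perm 'I_5},
      exists! sigma : {perm 'I_5}, sigma \in C /\ dkappa_le sigma pi 1.
Proof.
exists [set s | perm_seq s \in code5] => pi.
have pi_perm : perm_seq pi \in permutations (iota 0 5).
  by rewrite mem_permutations perm_seq_perm_eq.
have := allP code5_perfect _ pi_perm.
case ball_pi: [seq w <- code5 | ball1_seq 5 w (perm_seq pi)] => [|w []] // _.
have in_ball_pi w' : (w' \in code5) && ball1_seq 5 w' (perm_seq pi) = (w' == w).
  by rewrite andbC -(mem_filter (ball1_seq 5 ^~ (perm_seq pi))) ball_pi inE.
have /andP [w_code w_pi] : (w \in code5) && ball1_seq 5 w (perm_seq pi).
  by rewrite in_ball_pi.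
have [s ?] := perm_seq_onto (allP code5_perm_eq _ w_code); subst w.
exists s; split; first by split; [rewrite inE | apply/dkappa_le1_seq].
move=> t [t_code /dkappa_le1_seq t_pi]; apply/perm_seq_inj/eqP.
by rewrite inE in t_code; rewrite eq_sym -in_ball_pi t_code t_pi.
Qed.
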